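(* Let $A=B\wr_Q\mathcal{H}(d)$ be a quantum wreath product whose parameters $Q=(R,S,\rho,\sigma)$ satisfy: $\sigma$ is the flip $a\otimes b\mapsto b\otimes a$, $\rho=0$, and Conditions (C1)–(C9) hold. Let $V_B$ be a right $B$-module with $K$-basis $\{v_i\}_{i\in I}$, $I$ totally ordered, let $V_B^{\otimes d}$ be a right $B^{\otimes d}$-module via the factorwise action, let $\mu\in I^d$ with $\mu_1<\cdots<\mu_d$, and let $W$ be the $B^{\otimes d}$-submodule of $V_B^{\otimes d}$ generated by $\{v_{\mu\cdot g}\mid g\in\Sigma_d\}$. Consider the rule, for $\nu\in\{\mu\cdot g\mid g\in\Sigma_d\}$ and $1\le i\le d-1$: $v_\nu.H_i=v_{\nu\cdot s_i}$ if $\nu_i<\nu_{i+1}$, and $v_\nu.H_i=v_{\nu\cdot s_i}.R_i+v_\nu.S_i$ if $\nu_i>\nu_{i+1}$. (a) If $B$ acts on $V_B$ through a counit $\epsilon:B\to K$ (i.e. $v.b=\epsilon(b)v$), and there is $r\in K$ with $r^2=\epsilon(S)r+\epsilon(R)$, then this rule, together with the action of $B^{\otimes d}$, extends to a right $A$-module structure on $W$. (b) If $S=0$ and $R=1\otimes1$, then this rule, together with the action of $B^{\otimes d}$, extends to a right $A$-module structure on $W$.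
   Context: $K$ commutative ring, $B$ associative unital $K$-algebra free over $K$, $d\ge2$, tensor products over $K$. For $Z\in B\otimes B$, $Z_i:=1^{\otimes(i-1)}\otimes Z\otimes1^{\otimes(d-i-1)}$; $\phi_i$ applies $\phi\in\operatorname{End}_K(B\otimes B)$ to tensor factors $i,i+1$. $B\wr_Q\mathcal{H}(d)$: $K$-algebra generated by the algebra $B^{\otimes d}$ and $H_1,\dots,H_{d-1}$ with $H_kH_{k+1}H_k=H_{k+1}H_kH_{k+1}$, $H_iH_j=H_jH_i$ ($|i-j|\ge2$), $H_i^2=S_iH_i+R_i$, $H_ib=\sigma_i(b)H_i+\rho_i(b)$. With $\sigma$ the flip and $\rho=0$, Conditions (C1)–(C9) amount to (and are implied by) $\sigma(R)=R$, $(\sigma(S)-S)R=0$, and $Sx=\sigma(x)S$... more precisely they are: (C1) $\sigma(1\otimes1)=1\otimes1$; (C2) $\sigma$ multiplicative; (C3) $\sigma(S)S+\sigma(R)=S^2+R$, $\sigma(S)R=SR$; (C4) $\sigma^2(a)S=S\sigma(a)$ and $\sigma^2(a)R=Ra$ for all $a\in B\otimes B$; (C5) $\sigma_1\sigma_2\sigma_1=\sigma_2\sigma_1\sigma_2$ on $B^{\otimes3}$; (C8) $S_i=\sigma_j\sigma_i(S_j)$, $R_i=\sigma_j\sigma_i(R_j)$ in $B^{\otimes3}$ for $\{i,j\}=\{1,2\}$ (the remaining conditions (C6),(C7),(C9) being trivial when $\rho=0$). $v_\nu:=v_{\nu_1}\otimes\cdots\otimes v_{\nu_d}$; $\Sigma_d$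 acts on $I^d$ by place permutations, $\nu\cdot s_i$ swapping entries $i,i+1$. For $X\in B\otimes B$, $\epsilon(X):=(\epsilon\otimes\epsilon)(X)$. *)

From HB Require Import structures.
From mathcomp Require Import all_boot all_order all_algebra.
From mathcomp Require Import finmap monalg.

Set Implicit Arguments.
Unset Strict Implicit.
Unset Printing Implicit Defensive.

Import Order.TTheory GRing.Theory.
Local Open Scope ring_scope.

(* B is the free K-module {malg K[J]} on a basis (b_j)_{j in J}, with
   multiplication given by structure constants  mulb j j' = b_j b_j'.
   B^{\otimes n} is modelled as the free K-module on the basis tensors
   b_{s_1} (x) ... (x) b_{s_n}, i.e. {malg K[seq J]} restricted to keys of
   length n (predicate [homog n]).  Similarly V_B = {malg K[I]} with basis
   (v_i)_{i in I} and V_B^{\otimes d} = {malg K[seq I]} (keys of length d). *)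

Section QWP.
Context {K : comNzRingType}.

Fixpoint ptens {X : choiceType} (l : seq {malg K[X]}) : {malg K[seq X]} :=
  match l with
  | [::] => << [::] >>
  | x :: l' =>
      \sum_(j <- msupp x) \sum_(s <- msupp (ptens l'))
         << x@_j * (ptens l')@_s *g (j :: s) >>
  end.

(* tensor product (concatenation) of tensors *)
Definition tcat {X : choiceType} (A C : {malg K[seq X]}) : {malg K[seq X]} :=
  \sum_(s <- msupp A) \sum_(t <- msupp C) << A@_s * C@_t *g (s ++ t) >>.

Definition mapkeys {X : choiceType} (f : seq X -> seq X) (A : {malg K[seq X]})
  : {malg K[seq X]} :=
  \sum_(s <- msupp A) << A@_s *g f s >>.

Definition homog {X : choiceType} (n : nat) (A : {malg K[seq X]}) : Prop :=
  forall s, s \in msupp A -> size s = n.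

Section Algebra.
Variables (J : choiceType) (mulb : J -> J -> {malg K[J]}).

Definition bmul (x y : {malg K[J]}) : {malg K[J]} :=
  \sum_(j <- msupp x) \sum_(j' <- msupp y) (x@_j * y@_j') *: mulb j j'.

Definition tmul (A C : {malg K[seq J]}) : {malg K[seq J]} :=
  \sum_(s <- msupp A) \sum_(t <- msupp C)
     (A@_s * C@_t) *: ptens [seq mulb p.1 p.2 | p <- zip s t].

Variable oneB : {malg K[J]}.

Definition emb (d i : nat) (Z : {malg K[seq J]}) : {malg K[seq J]} :=
  tcat (tcat (ptens (nseq i.-1 oneB)) Z) (ptens (nseq (d - i.+1) oneB)).
End Algebra.

(* swapping the entries at positions n+1, n+2 (1-indexed) of a sequence:
   the place permutation by s_{n+1}                                        *)
Fixpoint swapn {X : Type} (n : nat) (s : seq X) : seq X :=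
  match n, s with
  | 0, x :: y :: s' => y :: x :: s'
  | n'.+1, x :: s' => x :: swapn n' s'
  | _, _ => s
  end.

(* sigma_i on B^{\otimes d} (1-indexed i): flip of the factors i, i+1 *)
Definition sigma_i {X : choiceType} (i : nat) (A : {malg K[seq X]}) :=
  mapkeys (swapn i.-1) A.

(* nu_{n+1} < nu_{n+2} *)
Fixpoint ascentn {dI : Order.disp_t} {X : orderType dI} (n : nat) (s : seq X)
  : bool :=
  match n, s with
  | 0, x :: y :: _ => (x < y)%O
  | n'.+1, _ :: s' => ascentn n' s'
  | _, _ => false
  end.

Section Module.
Variables (J I : choiceType) (act : I -> J -> {malg K[I]}).

(* right action of B on V_B, bilinear extension of act i j = v_i . b_j *)
Definition vactB (v : {malg K[I]}) (x : {malg K[J]}) : {malg K[I]} :=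
  \sum_(i <- msupp v) \sum_(j <- msupp x) (v@_i * x@_j) *: act i j.

Definition vact (w : {malg K[seq I]}) (A : {malg K[seq J]}) : {malg K[seq I]} :=
  \sum_(nu <- msupp w) \sum_(s <- msupp A)
     (w@_nu * A@_s) *: ptens [seq act p.1 p.2 | p <- zip nu s].

(* W = the B^{\otimes d}-submodule generated by the v_{mu.g}, g in Sigma_d
   (the orbit of mu under place permutations = rearrangements of mu) *)
Definition inW (d : nat) (mu : seq I) (w : {malg K[seq I]}) : Prop :=
  exists l : seq (seq I * {malg K[seq J]}),
    (forall p, p \in l -> perm_eq p.1 mu /\ homog d p.2) /\
    w = \sum_(p <- l) vact << p.1 >> p.2.
End Module.

Definition epsB {J : choiceType} (eps : J -> K) (x : {malg K[J]}) : K :=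
  \sum_(j <- msupp x) x@_j * eps j.
Definition epsT {J : choiceType} (eps : J -> K) (A : {malg K[seq J]}) : K :=
  \sum_(s <- msupp A) A@_s * \prod_(j <- s) eps j.

(* "The rule, together with the action of B^{\otimes d}, extends to a right
   A-module structure on W", A = B wr_Q H(d) with sigma = flip, rho = 0:
   there are K-linear endomorphisms h i of W (the action of H_i) obeying the
   rule on the generators v_nu and all defining relations of A, where
   B^{\otimes d} acts by vact.                                              *)
Definition extends_to_A_module {dI : Order.disp_t} (J : choiceType)
  (I : orderType dI) (mulb : J -> J -> {malg K[J]}) (oneB : {malg K[J]})
  (act : I -> J -> {malg K[I]}) (S R : {malg K[seq J]}) (d : nat)
  (mu : seq I) : Prop :=
  let W := inW act d mu in
  let Si i := emb oneB d i S in
  let Ri i := emb oneB d i R in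
  exists h : nat -> {malg K[seq I]} -> {malg K[seq I]},
  (forall i, (1 <= i <= d.-1)%N -> forall w, W w -> W (h i w)) /\
  (forall i, (1 <= i <= d.-1)%N -> forall (a : K) w w', W w -> W w' ->
      h i (a *: w + w') = a *: h i w + h i w') /\
  (forall i, (1 <= i <= d.-1)%N -> forall nu : seq I, perm_eq nu mu ->
      h i << nu >> =
        if ascentn i.-1 nu then << swapn i.-1 nu >>
        else vact act << swapn i.-1 nu >> (Ri i) + vact act << nu >> (Si i)) /\
  (forall k, (1 <= k)%N -> (k.+1 <= d.-1)%N -> forall w, W w ->
      h k (h k.+1 (h k w)) = h k.+1 (h k (h k.+1 w))) /\
  (forall i j, (1 <= i <= d.-1)%N -> (1 <= j <= d.-1)%N -> ((i.+1 < j) || (j.+1 < i))%N ->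
      forall w, W w -> h i (h j w) = h j (h i w)) /\
  (* H_i^2 = S_i H_i + R_i  (right action: w.(S_i H_i) = (w.S_i).H_i) *)
  (forall i, (1 <= i <= d.-1)%N -> forall w, W w ->
      h i (h i w) = h i (vact act w (Si i)) + vact act w (Ri i)) /\
  (* H_i b = sigma_i(b) H_i  (rho = 0) for all b in B^{\otimes d} *)
  (forall i, (1 <= i <= d.-1)%N -> forall b, homog d b -> forall w, W w ->
      vact act (h i w) b = h i (vact act w (sigma_i i b))).

End QWP.

From HB Require Import structures.
From mathcomp Require Import all_boot all_order all_algebra.
From mathcomp Require Import finmap monalg zify ring.
Import Order.TTheory GRing.Theory.
Local Open Scope fset_scope.
Local Open Scope ring_scope.

(* When B acts on V_B through a counit, v_nu.b = eps(b) v_nu, so W is the span of the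
   v_nu with nu a rearrangement of mu, and the rule defines on W the right regular action
   of the Hecke algebra with quadratic relation H^2 = eps(S) H + eps(R).  Every relation
   only involves the rearrangements of two or three neighbouring letters of nu, where it
   is a finite check; H_i b = sigma_i(b) H_i holds because both sides scale by eps(b).
   When S = 0 and R = 1 (x) 1, the rule says v_nu.H_i = v_(nu.s_i) in both cases, so H_i
   acts on W as the place permutation sigma_i, and the relations of A reduce to those of
   the symmetric group and to sigma_i(w.b) = sigma_i(w).sigma_i(b). *)

(** * Linear maps on free modules *)

Section LinearExtension.
Context {K : comNzRingType}.

Lemma monalgUZ {X : choiceType} (c : K) (k : X) : << c *g k >> = c *: << k >>.
Proof. by apply/malgP => k'; rewrite mcoeffZ !mcoeffU mulr_natr. Qed.

Section LinearMap.
Context {X : choiceType} {V : lmodType K} {f : {malg K[X]} -> V}.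
Hypothesis f_lin : linear f.

Lemma lin0 : f 0 = 0.
Proof.
have f00 := f_lin 1 0 0; rewrite scaler0 addr0 scale1r in f00.
by apply: (addrI (f 0)); rewrite addr0 -f00.
Qed.

Lemma linD a b : f (a + b) = f a + f b.
Proof. by have := f_lin 1 a b; rewrite !scale1r. Qed.

Lemma linZ c a : f (c *: a) = c *: f a.
Proof. by have := f_lin c a 0; rewrite !addr0 lin0 addr0. Qed.

Lemma lin_sum (T : Type) (r : seq T) (F : T -> {malg K[X]}) :
  f (\sum_(i <- r) F i) = \sum_(i <- r) f (F i).
Proof.
by elim: r => [|x r IH]; rewrite ?big_nil ?lin0 // !big_cons linD IH.
Qed.

Lemma lin_malgE g : f g = \sum_(k <- msupp g) g@_k *: f << k >>.
Proof.
rewrite {1}[g]monalgE lin_sum; apply: eq_bigr => k _.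
by rewrite monalgUZ linZ.
Qed.
End LinearMap.

Lemma eq_lin_msupp {X : choiceType} {V : lmodType K} (f g : {malg K[X]} -> V) a :
  linear f -> linear g -> (forall k, k \in msupp a -> f << k >> = g << k >>) ->
  f a = g a.
Proof.
move=> fl gl fg; rewrite (lin_malgE fl) (lin_malgE gl).
by apply: eq_big_seq => k /fg ->.
Qed.

Lemma eq_bilin_msupp {X Y : choiceType} {V : lmodType K}
    (F G : {malg K[X]} -> {malg K[Y]} -> V) a b :
  (forall b, linear (F ^~ b)) -> (forall a, linear (F a)) ->
  (forall b, linear (G ^~ b)) -> (forall a, linear (G a)) ->
  (forall x y, x \in msupp a -> y \in msupp b -> F << x >> << y >> = G << x >> << y >>) ->
  F a b = G a b.
Proof.
move=> Fl1 Fl2 Gl1 Gl2 FG; apply: (eq_lin_msupp (F ^~ b) (G ^~ b)) => // x xa.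
by apply: eq_lin_msupp => // y yb; apply: FG.
Qed.

Lemma lin_comp {X Y : choiceType} {V : lmodType K}
    {f : {malg K[X]} -> {malg K[Y]}} {g : {malg K[Y]} -> V} :
  linear f -> linear g -> linear (g \o f).
Proof. by move=> fl gl c a b; rewrite /= fl gl. Qed.

Lemma lin_comb {X : choiceType} {V : lmodType K} (f g : {malg K[X]} -> V) (a b : K) :
  linear f -> linear g -> linear (fun u => a *: f u + b *: g u).
Proof.
move=> fl gl c u v; rewrite fl gl !scalerDr !scalerA [a * c]mulrC [b * c]mulrC -!scalerA.
by rewrite addrACA.
Qed.

Lemma lin_mulr {X : choiceType} (f : {malg K[X]} -> K^o) (k : K) :
  linear f -> linear (fun a => f a * k : K^o).
Proof. by move=> fl c a b; rewrite fl mulrDl -mulrA. Qed.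

Lemma lin_mull {X : choiceType} (f : {malg K[X]} -> K^o) (k : K) :
  linear f -> linear (fun a => k * f a : K^o).
Proof. by move=> fl c a b; rewrite fl mulrDr mulrCA. Qed.

Section Extension.
Context {X : choiceType} {V : lmodType K}.

Definition linext (F : X -> V) (g : {malg K[X]}) : V :=
  \sum_(k <- msupp g) g@_k *: F k.

Lemma linextEw F {g : {malg K[X]}} {dom : {fset X}} : msupp g `<=` dom ->
  linext F g = \sum_(k <- dom) g@_k *: F k.
Proof.
move=> le; rewrite /linext (big_fset_incl _ le) // => x _ /mcoeff_outdom ->.
by rewrite scale0r.
Qed.

Lemma linext_is_linear F : linear (linext F).
Proof.
move=> c a b; set dom := msupp a `|` msupp b.
have le : msupp (c *: a + b) `<=` dom.
  exact: fsubset_trans (msuppD_le _ _) (fsetUSS (msuppZ_le _ _) (fsubset_refl _)).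
rewrite (linextEw _ le) (linextEw _ (fsubsetUl (msupp a) (msupp b))).
rewrite (linextEw _ (fsubsetUr (msupp a) (msupp b))) scaler_sumr -big_split.
by apply: eq_bigr => k _; rewrite mcoeffD mcoeffZ scalerDl scalerA.
Qed.

Lemma linextU F k : linext F << k >> = F k.
Proof. by rewrite (linextEw _ msuppU_le) big_seq_fset1 mcoeffUU scale1r. Qed.

Lemma eq_linext F G g : {in msupp g, F =1 G} -> linext F g = linext G g.
Proof. by move=> FG; apply: eq_big_seq => k /FG ->. Qed.
End Extension.

Section BilinearExtension.
Context {X Y : choiceType} {V : lmodType K} (F : X -> Y -> V).

Definition linext2 (a : {malg K[X]}) (b : {malg K[Y]}) : V :=
  linext (fun x => linext (F x) b) a.

Lemma linext2_linl b : linear (linext2 ^~ b).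
Proof. exact: linext_is_linear. Qed.

Lemma linext2_linr a : linear (linext2 a).
Proof.
move=> c b b'; rewrite /linext2 !(linextEw _ (fsubset_refl (msupp a))).
rewrite scaler_sumr -big_split /=.
by apply: eq_bigr => x _; rewrite linext_is_linear scalerDr !scalerA mulrC.
Qed.

Lemma linext2U x y : linext2 << x >> << y >> = F x y.
Proof. by rewrite /linext2 !linextU. Qed.
End BilinearExtension.

Lemma linext_malgU {X : choiceType} (g : {malg K[X]}) : linext (fun k => << k >>) g = g.
Proof. by rewrite {2}[g]monalgE; apply: eq_bigr => k _; rewrite monalgUZ. Qed.
End LinearExtension.

(** * Tensor operations *)

Section TensorOperations.
Context {K : comNzRingType}.

Definition tcons {X : choiceType} : {malg K[X]} -> {malg K[seq X]} -> {malg K[seq X]} :=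
  linext2 (fun j s => << j :: s >>).

Lemma ptens_cons {X : choiceType} (x : {malg K[X]}) l : ptens (x :: l) = tcons x (ptens l).
Proof.
rewrite /= /tcons /linext2 /linext; apply: eq_bigr => j _.
by rewrite scaler_sumr; apply: eq_bigr => s _; rewrite monalgUZ scalerA.
Qed.

Lemma mapkeysE {X : choiceType} (f : seq X -> seq X) (A : {malg K[seq X]}) :
  mapkeys f A = linext (fun s => << f s >>) A.
Proof. by apply: eq_bigr => s _; rewrite monalgUZ. Qed.

Lemma tcatE {X : choiceType} (A C : {malg K[seq X]}) :
  tcat A C = linext2 (fun s t => << s ++ t >>) A C.
Proof.
rewrite /tcat /linext2 /linext; apply: eq_bigr => s _.
by rewrite scaler_sumr; apply: eq_bigr => t _; rewrite monalgUZ scalerA.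
Qed.

Lemma vactE {J I : choiceType} (act : I -> J -> {malg K[I]}) w A :
  vact act w A = linext2 (fun nu s => ptens [seq act p.1 p.2 | p <- zip nu s]) w A.
Proof.
rewrite /vact /linext2 /linext; apply: eq_bigr => nu _.
by rewrite scaler_sumr; apply: eq_bigr => s _; rewrite scalerA.
Qed.

Lemma vactBE {J I : choiceType} (act : I -> J -> {malg K[I]}) v x :
  vactB act v x = linext2 act v x.
Proof.
rewrite /vactB /linext2 /linext; apply: eq_bigr => i _.
by rewrite scaler_sumr; apply: eq_bigr => j _; rewrite scalerA.
Qed.

Section Keys.
Context {X : choiceType}.
Implicit Types (A C P : {malg K[seq X]}) (x : {malg K[X]}).

Lemma tcons_linl P : linear (@tcons X ^~ P).
Proof. exact: linext2_linl. Qed.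
Lemma tcons_linr x : linear (@tcons X x).
Proof. exact: linext2_linr. Qed.
Lemma tconsU (j : X) s : tcons << j >> << s >> = << j :: s >> :> {malg K[seq X]}.
Proof. exact: linext2U. Qed.

Lemma tcat_linl C : linear (@tcat K X ^~ C).
Proof. by move=> c A A'; rewrite !tcatE linext2_linl. Qed.
Lemma tcat_linr A : linear (@tcat K X A).
Proof. by move=> c C C'; rewrite !tcatE linext2_linr. Qed.
Lemma tcatU (s t : seq X) : tcat << s >> << t >> = << s ++ t >> :> {malg K[seq X]}.
Proof. by rewrite tcatE linext2U. Qed.

Lemma mapkeys_is_linear (f : seq X -> seq X) : linear (@mapkeys K X f).
Proof. by move=> c A A'; rewrite !mapkeysE linext_is_linear. Qed.
Lemma mapkeysU (f : seq X -> seq X) s : mapkeys f << s >> = << f s >> :> {malg K[seq X]}.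
Proof. by rewrite mapkeysE linextU. Qed.

Lemma mapkeys_comp (f g : seq X -> seq X) A :
  mapkeys f (mapkeys g A) = mapkeys (f \o g) A.
Proof.
apply: (eq_lin_msupp (mapkeys f \o mapkeys g)) => [||s _].
- exact: lin_comp (mapkeys_is_linear _) (mapkeys_is_linear _).
- exact: mapkeys_is_linear.
- by rewrite /= !mapkeysU.
Qed.

Lemma eq_mapkeys {f g : seq X -> seq X} {A} :
  {in msupp A, f =1 g} -> mapkeys f A = mapkeys g A.
Proof. by move=> fg; rewrite !mapkeysE; apply: eq_linext => s /fg ->. Qed.

Lemma mapkeys_id (f : seq X -> seq X) A : {in msupp A, f =1 id} -> mapkeys f A = A.
Proof. by move=> f_id; rewrite (eq_mapkeys f_id) mapkeysE linext_malgU. Qed.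
End Keys.

Section Actions.
Context {J I : choiceType} (act : I -> J -> {malg K[I]}).

Lemma vact_linl A : linear (vact act ^~ A).
Proof. by move=> c w w'; rewrite !vactE linext2_linl. Qed.
Lemma vact_linr w : linear (vact act w).
Proof. by move=> c A A'; rewrite !vactE linext2_linr. Qed.
Lemma vactU nu s : vact act << nu >> << s >> = ptens [seq act p.1 p.2 | p <- zip nu s].
Proof. by rewrite vactE linext2U. Qed.

Lemma vactB_linr v : linear (vactB act v).
Proof. by move=> c x x'; rewrite !vactBE linext2_linr. Qed.
Lemma vactBU i j : vactB act << i >> << j >> = act i j.
Proof. by rewrite vactBE linext2U. Qed.
End Actions.

Section Counit.
Context {J : choiceType} (eps : J -> K).

Lemma epsT_is_linear : linear (epsT eps : {malg K[seq J]} -> K^o).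
Proof. exact: linext_is_linear. Qed.
Lemma epsTU s : epsT eps << s >> = \prod_(j <- s) eps j.
Proof. exact: (linextU (V := K^o)). Qed.
Lemma epsB_is_linear : linear (epsB eps : {malg K[J]} -> K^o).
Proof. exact: linext_is_linear. Qed.
Lemma epsBU j : epsB eps << j >> = eps j.
Proof. exact: (linextU (V := K^o)). Qed.
End Counit.
End TensorOperations.

Section SupportPredicates.
Context {K : comNzRingType} {X : choiceType} (P : X -> Prop).

Lemma msupp_sum_in (T : eqType) (r : seq T) (F : T -> {malg K[X]}) :
  {in r, forall i, {in msupp (F i), forall s, P s}} ->
  {in msupp (\sum_(i <- r) F i), forall s, P s}.
Proof.
elim: r => [|i r IH] hF s; first by rewrite big_nil msupp0.
rewrite big_cons => /(fsubsetP (msuppD_le _ _)); rewrite in_fsetU.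
case/orP => [|/IH]; first by apply: hF; rewrite mem_head.
by apply=> j jr; apply: hF; rewrite in_cons jr orbT.
Qed.

Lemma msupp_linext_in {Y : choiceType} (F : Y -> {malg K[X]}) (g : {malg K[Y]}) :
  {in msupp g, forall k, {in msupp (F k), forall s, P s}} ->
  {in msupp (linext F g), forall s, P s}.
Proof.
move=> hF; apply: msupp_sum_in => k /hF hk s.
by move/(fsubsetP (msuppZ_le _ _))/hk.
Qed.
End SupportPredicates.

Section Homogeneous.
Context {K : comNzRingType} {X : choiceType}.
Implicit Types (A C : {malg K[seq X]}).

Lemma homogU n s : size s = n -> homog n (<< s >> : {malg K[seq X]}).
Proof. by move=> sn t /(fsubsetP msuppU_le); rewrite in_fset1 => /eqP ->. Qed.

Lemma homog_ptens (l : seq {malg K[X]}) : homog (size l) (ptens l).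
Proof.
elim: l => [|x l IH]; first exact: homogU.
rewrite ptens_cons /tcons /linext2; apply: msupp_linext_in => j _.
by apply: msupp_linext_in => s /IH sl; apply: homogU; rewrite /= sl.
Qed.

Lemma homog_tcat a b A C : homog a A -> homog b C -> homog (a + b) (tcat A C).
Proof.
move=> hA hC; rewrite tcatE /linext2; apply: msupp_linext_in => s /hA sA.
by apply: msupp_linext_in => t /hC tC; apply: homogU; rewrite size_cat sA tC.
Qed.

Lemma homog_mapkeys n (f : seq X -> seq X) A :
  (forall s, size (f s) = size s) -> homog n A -> homog n (mapkeys f A).
Proof.
move=> hf hA; rewrite mapkeysE; apply: msupp_linext_in => s /hA sn.
by apply: homogU; rewrite hf.
Qed.
End Homogeneous.

Lemma homog_vact {K : comNzRingType} {J I : choiceType} (act : I -> J -> {malg K[I]}) d w A :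
  homog d w -> homog d A -> homog d (vact act w A).
Proof.
move=> hw hA; rewrite vactE /linext2; apply: msupp_linext_in => nu /hw nud.
apply: msupp_linext_in => s /hA sd; have := homog_ptens [seq act p.1 p.2 | p <- zip nu s].
by rewrite size_map size_zip nud sd minnn.
Qed.

Lemma homog_emb {K : comNzRingType} {J : choiceType} (oneB : {malg K[J]}) d i
    (Z : {malg K[seq J]}) :
  homog 2 Z -> (1 <= i <= d.-1)%N -> homog d (emb oneB d i Z).
Proof.
move=> hZ hi; have {1}-> : d = (i.-1 + 2 + (d - i.+1))%N by lia.
have := homog_ptens (nseq i.-1 oneB); have := homog_ptens (nseq (d - i.+1) oneB).
by rewrite !size_nseq => h1 h2; apply: homog_tcat => //; apply: homog_tcat.
Qed.

(** * Place permutations *)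

Section PlacePermutations.
Context {X : Type}.
Implicit Types (s : seq X).

Lemma size_swapn n s : size (swapn n s) = size s.
Proof. by elim: n s => [|n IH] [|x [|y s]] //=; rewrite IH. Qed.

Lemma swapnK n : involutive (@swapn X n).
Proof. by elim: n => [|n IH] [|x [|y s]] //=; rewrite ?IH //= IH. Qed.

Lemma map_swapn {Y : Type} (f : X -> Y) n s : map f (swapn n s) = swapn n (map f s).
Proof. by elim: n s => [|n IH] [|x [|y s]] //=; rewrite IH. Qed.

Lemma swapn_cat p s : swapn (size p) (p ++ s) = p ++ swapn 0 s.
Proof. by elim: p => [|x p /= ->]. Qed.

Lemma swapn_short n s : (size s <= n.+1)%N -> swapn n s = s.
Proof. by elim: n s => [|n IH] [|x [|y s]] //= H; rewrite IH. Qed.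

Lemma swapnC m n s : (m.+1 < n)%N -> swapn m (swapn n s) = swapn n (swapn m s).
Proof.
elim: m n s => [|m IH] [|n] s // H; first by case: n H => [|n] //; case: s => [|x [|y s]].
by case: s => [|x s] //=; rewrite IH.
Qed.

Lemma swapn_braid n s : (n.+3 <= size s)%N ->
  swapn n (swapn n.+1 (swapn n s)) = swapn n.+1 (swapn n (swapn n.+1 s)).
Proof. by elim: n s => [|n IH] [|x [|y [|z s]]] //= ?; rewrite IH. Qed.
End PlacePermutations.

Lemma zip_swapn {X Y : Type} n (s : seq X) (t : seq Y) : size s = size t ->
  zip (swapn n s) (swapn n t) = swapn n (zip s t).
Proof.
elim: n s t => [|n IH] [|x s] [|a t] //= [st]; last by rewrite IH.
by case: s st => [|y s]; case: t => [|b t].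
Qed.

Lemma perm_swapn {X : eqType} n (s : seq X) : perm_eq (swapn n s) s.
Proof.
elim: n s => [|n IH] [|x s] //=; last by rewrite perm_cons IH.
by case: s => [|y s] //; apply/permP => p /=; rewrite addnCA.
Qed.

Lemma split_at3 {X : Type} n (s : seq X) : (n.+2 < size s)%N ->
  exists pre a b c t, size pre = n /\ s = pre ++ [:: a, b, c & t].
Proof.
move=> lt_n; have : (2 < size (drop n s))%N by rewrite size_drop ltn_subRL addn2.
case: (drop n s) (cat_take_drop n s) => [|a [|b [|c t]]] // Es _.
by exists (take n s), a, b, c, t; rewrite size_takel //; lia.
Qed.

Section Ascents.
Context {dI : Order.disp_t} {I : orderType dI}.
Implicit Types (s : seq I).

Lemma ascentn_cat (p s : seq I) : ascentn (size p) (p ++ s) = ascentn 0 s.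
Proof. by elim: p. Qed.

Lemma ascentn_swapn m n s : (m.+1 < n)%N || (n.+1 < m)%N ->
  ascentn m (swapn n s) = ascentn m s.
Proof.
elim: m n s => [|m IH] [|n] s //.
- by case: n => [|n] // _; case: s => [|x [|y s]].
- by case: m IH => [|m] // IH _; case: s => [|x [|y s]].
- by move=> mn; case: s => [|x s] //=; rewrite IH.
Qed.

Lemma ascentn_swapn_self n s :
  uniq s -> (n.+1 < size s)%N -> ascentn n (swapn n s) = ~~ ascentn n s.
Proof.
elim: n s => [|n IH] [|x [|y s]] //=; last by case/andP=> _ us ?; apply: IH.
rewrite inE negb_or => /andP[/andP[xy _] _] _.
by rewrite ltNge le_eqVlt (negbTE xy).
Qed.
End Ascents.

Section TensorIdentities.
Context {K : comNzRingType}.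

Lemma tcat_tcons {X : choiceType} (x : {malg K[X]}) P Q :
  tcat (tcons x P) Q = tcons x (tcat P Q).
Proof.
apply: (eq_lin_msupp (fun x => tcat (tcons x P) Q) (fun x => tcons x (tcat P Q))) => [||j _].
- exact: lin_comp (tcons_linl _) (tcat_linl _).
- exact: tcons_linl.
apply: (eq_bilin_msupp (fun P Q => tcat (tcons << j >> P) Q)
                       (fun P Q => tcons << j >> (tcat P Q)))
  => [P'|P'|Q'|P'|s t _ _] /=.
- exact: lin_comp (tcons_linr _) (tcat_linl _).
- exact: tcat_linr.
- exact: lin_comp (tcat_linl _) (tcons_linr _).
- exact: lin_comp (tcat_linr _) (tcons_linr _).
- by rewrite tconsU !tcatU tconsU.
Qed.

Lemma ptens_cat {X : choiceType} (a b : seq {malg K[X]}) :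
  tcat (ptens a) (ptens b) = ptens (a ++ b).
Proof.
elim: a => [|x a IH]; last by rewrite cat_cons !ptens_cons tcat_tcons IH.
by rewrite /= tcatE /linext2 linextU linext_malgU.
Qed.

Lemma ptens_malgU {X : choiceType} (nu : seq X) :
  ptens [seq << x >> | x <- nu] = << nu >> :> {malg K[seq X]}.
Proof. by elim: nu => [|x nu IH] //; rewrite map_cons ptens_cons IH tconsU. Qed.

Lemma swapn0_tcons {X : choiceType} (x y : {malg K[X]}) P :
  mapkeys (swapn 0) (tcons x (tcons y P)) = tcons y (tcons x P).
Proof.
apply: (eq_lin_msupp (fun x => mapkeys (swapn 0) (tcons x (tcons y P)))
                     (fun x => tcons y (tcons x P))) => [||i _].
- exact: lin_comp (tcons_linl _) (mapkeys_is_linear _).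
- exact: lin_comp (tcons_linl _) (tcons_linr _).
apply: (eq_bilin_msupp (fun y P => mapkeys (swapn 0) (tcons << i >> (tcons y P)))
                       (fun y P => tcons y (tcons << i >> P))) => [P'|y'|P'|y'|j s _ _] /=.
- exact: lin_comp (tcons_linl P') (lin_comp (tcons_linr << i >>) (mapkeys_is_linear _)).
- exact: lin_comp (tcons_linr y') (lin_comp (tcons_linr << i >>) (mapkeys_is_linear _)).
- exact: tcons_linl.
- exact: lin_comp (tcons_linr _) (tcons_linr _).
- by rewrite !tconsU mapkeysU.
Qed.

Lemma swapnS_tcons {X : choiceType} n (x : {malg K[X]}) P :
  mapkeys (swapn n.+1) (tcons x P) = tcons x (mapkeys (swapn n) P).
Proof.
apply: (eq_bilin_msupp (fun x P => mapkeys (swapn n.+1) (tcons x P))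
                       (fun x P => tcons x (mapkeys (swapn n) P))) => [P'|x'|P'|x'|i s _ _] /=.
- exact: lin_comp (tcons_linl _) (mapkeys_is_linear _).
- exact: lin_comp (tcons_linr _) (mapkeys_is_linear _).
- exact: tcons_linl.
- exact: lin_comp (mapkeys_is_linear _) (tcons_linr _).
- by rewrite tconsU !mapkeysU tconsU.
Qed.

Lemma ptens_swapn {X : choiceType} n (l : seq {malg K[X]}) :
  mapkeys (swapn n) (ptens l) = ptens (swapn n l).
Proof.
elim: n l => [|n IH] [|x l]; rewrite ?mapkeysU //.
- case: l => [|y l]; last by rewrite !ptens_cons swapn0_tcons.
  by apply: mapkeys_id => s /(homog_ptens [:: x]) sx; apply: swapn_short; rewrite sx.
- by rewrite ptens_cons swapnS_tcons IH -ptens_cons.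
Qed.

Section Action.
Context {J I : choiceType} (act : I -> J -> {malg K[I]}).

Lemma vact_tcons x nu y P :
  vact act << x :: nu >> (tcons y P) = tcons (vactB act << x >> y) (vact act << nu >> P).
Proof.
apply: (eq_bilin_msupp (fun y P => vact act << x :: nu >> (tcons y P))
                       (fun y P => tcons (vactB act << x >> y) (vact act << nu >> P)))
  => [P'|y'|P'|y'|j s _ _] /=.
- exact: lin_comp (tcons_linl _) (vact_linr _ _).
- exact: lin_comp (tcons_linr _) (vact_linr _ _).
- exact: lin_comp (vactB_linr _ _) (tcons_linl _).
- exact: lin_comp (vact_linr _ _) (tcons_linr _).
- by rewrite tconsU !vactU vactBU [zip _ _]/= map_cons ptens_cons.
Qed.

Lemma vact_ptens nu l : size nu = size l ->
  vact act << nu >> (ptens l) = ptens [seq vactB act << p.1 >> p.2 | p <- zip nu l].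
Proof.
elim: nu l => [|x nu IH] [|y l] //; first by rewrite vactU.
move=> [snu]; rewrite ptens_cons vact_tcons IH //.
by rewrite [zip (x :: nu) _]/= map_cons ptens_cons.
Qed.

Variable oneB : {malg K[J]}.
Hypothesis Vunit : forall v, vactB act v oneB = v.

Lemma vact_ones nu : vact act << nu >> (ptens (nseq (size nu) oneB)) = << nu >>.
Proof.
rewrite vact_ptens ?size_nseq // -[RHS]ptens_malgU.
by elim: nu => [|x nu IH] //=; rewrite Vunit IH.
Qed.

Lemma vact_ones_homog d w : homog d w -> vact act w (ptens (nseq d oneB)) = w.
Proof.
move=> hw; apply: (eq_lin_msupp (vact act ^~ _) id) => [||nu /hw <-].
- exact: vact_linl.
- by [].
- exact: vact_ones.
Qed.

Lemma swapn_vact d n w A : homog d w -> homog d A ->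
  mapkeys (swapn n) (vact act w A) = vact act (mapkeys (swapn n) w) (mapkeys (swapn n) A).
Proof.
move=> hw hA.
apply: (eq_bilin_msupp (fun w A => mapkeys (swapn n) (vact act w A))
                       (fun w A => vact act (mapkeys (swapn n) w) (mapkeys (swapn n) A)))
  => [A'|w'|A'|w'|nu s /hw nud /hA sd] /=.
- exact: lin_comp (vact_linl _ _) (mapkeys_is_linear _).
- exact: lin_comp (vact_linr _ _) (mapkeys_is_linear _).
- exact: lin_comp (mapkeys_is_linear _) (vact_linl _ _).
- exact: lin_comp (mapkeys_is_linear _) (vact_linr _ _).
by rewrite !mapkeysU !vactU ptens_swapn -map_swapn zip_swapn // nud sd.
Qed.
End Action.
End TensorIdentities.

Section Embedding.
Context {K : comNzRingType} {J : choiceType} (oneB : {malg K[J]}).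

Lemma emb0 d i : emb oneB d i 0 = 0.
Proof. by rewrite /emb (lin0 (tcat_linr _)) (lin0 (tcat_linl _)). Qed.

Lemma emb_ones d i : (1 <= i <= d.-1)%N ->
  emb oneB d i (ptens [:: oneB; oneB]) = ptens (nseq d oneB).
Proof.
move=> hi; rewrite /emb !ptens_cat -[[:: oneB; oneB]]/(nseq 2 oneB) -!nseqD.
by congr (ptens (nseq _ _)); lia.
Qed.
End Embedding.

Section CounitIdentities.
Context {K : comNzRingType} {J : choiceType} (eps : J -> K).

Lemma epsT_tcons x P : epsT eps (tcons x P) = epsB eps x * epsT eps P.
Proof.
apply: (eq_bilin_msupp (fun x P => epsT eps (tcons x P) : K^o)
                       (fun x P => epsB eps x * epsT eps P : K^o)) => [P'|x'|P'|x'|j s _ _] /=.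
- exact: lin_comp (tcons_linl _) (epsT_is_linear eps).
- exact: lin_comp (tcons_linr _) (epsT_is_linear eps).
- exact: lin_mulr (epsB_is_linear eps).
- exact: lin_mull (epsT_is_linear eps).
- by rewrite tconsU !epsTU epsBU big_cons.
Qed.

Lemma epsT_ptens l : epsT eps (ptens l) = \prod_(x <- l) epsB eps x.
Proof.
elim: l => [|x l IH]; first by rewrite big_nil /= epsTU big_nil.
by rewrite ptens_cons epsT_tcons IH big_cons.
Qed.

Lemma epsT_tcat A C : epsT eps (tcat A C) = epsT eps A * epsT eps C.
Proof.
apply: (eq_bilin_msupp (fun A C => epsT eps (tcat A C) : K^o)
                       (fun A C => epsT eps A * epsT eps C : K^o)) => [C'|A'|C'|A'|s t _ _] /=.
- exact: lin_comp (tcat_linl _) (epsT_is_linear eps).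
- exact: lin_comp (tcat_linr _) (epsT_is_linear eps).
- exact: lin_mulr (epsT_is_linear eps).
- exact: lin_mull (epsT_is_linear eps).
- by rewrite tcatU !epsTU big_cat.
Qed.

Lemma epsT_emb oneB d i Z : epsB eps oneB = 1 -> epsT eps (emb oneB d i Z) = epsT eps Z.
Proof.
move=> eps1; have epsT_ones n : epsT eps (ptens (nseq n oneB)) = 1.
  by rewrite epsT_ptens big1_seq // => x /andP[_ /nseqP[-> _]].
by rewrite /emb !epsT_tcat !epsT_ones mul1r mulr1.
Qed.

Lemma epsT_swapn n A : epsT eps (mapkeys (swapn n) A) = epsT eps A.
Proof.
apply: (eq_lin_msupp (fun A => epsT eps (mapkeys (swapn n) A) : K^o)) => [||s _].
- exact: lin_comp (mapkeys_is_linear _) (epsT_is_linear eps).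
- exact: (epsT_is_linear eps).
by rewrite /= mapkeysU !epsTU (perm_big _ (perm_swapn n s)).
Qed.

Section CounitAction.
Context {I : choiceType} {act : I -> J -> {malg K[I]}}.
Hypothesis act_counit : forall i j, act i j = eps j *: << i >>.

Lemma ptens_act_counit (nu : seq I) (s : seq J) : size nu = size s ->
  ptens [seq act p.1 p.2 | p <- zip nu s] = (\prod_(j <- s) eps j) *: << nu >>.
Proof.
elim: nu s => [|x nu IH] [|j s] //; first by rewrite big_nil scale1r.
move=> [sn]; rewrite [zip _ _]/= map_cons ptens_cons IH //= act_counit.
by rewrite (linZ (tcons_linl _)) (linZ (tcons_linr _)) tconsU scalerA big_cons.
Qed.

Lemma vact_counit nu A : homog (size nu) A -> vact act << nu >> A = epsT eps A *: << nu >>.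
Proof.
move=> hA; apply: (eq_lin_msupp _ (fun A => epsT eps A *: << nu >>)) => [||s /hA sA].
- exact: vact_linr.
- by move=> c B C; rewrite epsT_is_linear scalerDl scalerA.
- by rewrite vactU ptens_act_counit ?epsTU.
Qed.

Lemma vact_counit_homog d w A : homog d w -> homog d A -> vact act w A = epsT eps A *: w.
Proof.
move=> hw hA; apply: (eq_lin_msupp (vact act ^~ A) ( *:%R (epsT eps A))) => [||nu /hw nud].
- exact: vact_linl.
- by move=> c u v; rewrite scalerDr !scalerA mulrC.
- by rewrite vact_counit // nud.
Qed.
End CounitAction.
End CounitIdentities.

Section Submodule.
Context {K : comNzRingType} {J I : choiceType} (act : I -> J -> {malg K[I]}).
Variables (d : nat) (mu : seq I).
Local Notation W := (inW act d mu).

Lemma inW0 : W 0.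
Proof. by exists [::]; rewrite big_nil. Qed.

Lemma inWD w w' : W w -> W w' -> W (w + w').
Proof.
move=> [l [Hl ->]] [l' [Hl' ->]]; exists (l ++ l'); rewrite big_cat; split=> // p.
by rewrite mem_cat => /orP[/Hl|/Hl'].
Qed.

Lemma inWZ c w : W w -> W (c *: w).
Proof.
move=> [l [Hl ->]]; exists [seq (p.1, c *: p.2) | p <- l]; split.
  by move=> _ /mapP[p /Hl[pm hp] ->]; split=> // s /(fsubsetP (msuppZ_le _ _)) /hp.
by rewrite big_map scaler_sumr; apply: eq_bigr => p _; rewrite (linZ (vact_linr _ _)).
Qed.

Lemma inW_linext {Y : choiceType} (F : Y -> {malg K[seq I]}) g :
  {in msupp g, forall k, W (F k)} -> W (linext F g).
Proof.
move=> hF; rewrite /linext big_seq; apply: big_ind => [||k /hF/inWZ//].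
- exact: inW0.
- exact: inWD.
Qed.

Lemma homog_inW w : size mu = d -> W w -> homog d w.
Proof.
move=> <- [l [Hl ->]]; apply: msupp_sum_in => p /Hl [pm hp].
by apply: homog_vact => //; apply: homogU; rewrite (perm_size pm).
Qed.

Lemma inW_malgU (oneB : {malg K[J]}) (Vunit : forall v, vactB act v oneB = v) nu :
  size mu = d -> perm_eq nu mu -> W << nu >>.
Proof.
move=> smu pm; have snu : size nu = d by rewrite (perm_size pm).
exists [:: (nu, ptens (nseq d oneB))]; rewrite big_seq1 -snu vact_ones //.
split=> // p; rewrite inE => /eqP -> /=; split=> //.
by have := homog_ptens (nseq (size nu) oneB); rewrite size_nseq.
Qed.
End Submodule.

(** * Hecke relations *)

Definition hecke_rule {K : comNzRingType} {V : lmodType K} (cS cR : K) (f : V -> V)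
    (asc : bool) (x y : V) :=
  f x = if asc then y else cR *: y + cS *: x.

Section HeckeRules.
Context {K : comNzRingType} {V : lmodType K} {cS cR : K} {f g : V -> V}.
Hypotheses (fD : {morph f : u v / u + v}) (fZ : forall c, {morph f : u / c *: u}).
Hypotheses (gD : {morph g : u v / u + v}) (gZ : forall c, {morph g : u / c *: u}).

Lemma hecke_rule_quadratic {asc x y} :
  hecke_rule cS cR f asc x y -> hecke_rule cS cR f (~~ asc) y x ->
  f (f x) = cS *: f x + cR *: x.
Proof.
rewrite /hecke_rule => fx fy; rewrite fx; case: asc fx fy => /= fx fy.
  by rewrite fy addrC.
by rewrite fD !fZ fy fx addrC.
Qed.

(* Relations among such operators are checked coordinatewise, through any separating
   family [coef] of linear coordinates (e.g. [mcoeff] on a free module); keeping [V]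
   abstract prevents rewriting from unfolding the basis vectors. *)
Context {T : Type} {coef : T -> V -> K}.
Hypotheses (coefD : forall t, {morph coef t : u v / u + v})
           (coefZ : forall c u t, coef t (c *: u) = c * coef t u)
           (coef_inj : forall u v, (forall t, coef t u = coef t v) -> u = v).

Lemma hecke_rule_comm {e : bool -> bool -> V} {af ag : bool} :
  (forall b, hecke_rule cS cR f af (e false b) (e true b)) ->
  (forall a, hecke_rule cS cR g ag (e a false) (e a true)) ->
  f (g (e false false)) = g (f (e false false)).
Proof.
rewrite /hecke_rule => fe ge; rewrite fe ge.
case: af fe; case: ag ge => ge fe; rewrite /= ?(fD, gD, fZ, gZ, fe, ge) //=.
by apply: coef_inj => t; rewrite !(coefD, coefZ); ring.
Qed.

Lemma hecke_rule_braid {dI : Order.disp_t} {I : orderType dI} {e : I -> I -> I -> V} :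
  (forall a b c, hecke_rule cS cR f (a < b)%O (e a b c) (e b a c)) ->
  (forall a b c, hecke_rule cS cR g (b < c)%O (e a b c) (e a c b)) ->
  forall a b c, a != b -> a != c -> b != c -> f (g (f (e a b c))) = g (f (g (e a b c))).
Proof.
rewrite /hecke_rule => fe ge a b c.
move=> /lt_total/orP[ab|ab] /lt_total/orP[ac|ac] /lt_total/orP[bc|bc].
all: try (exfalso; first [move: (lt_trans ab bc) | move: (lt_trans bc ab)]; by rewrite lt_gtF).
all: rewrite !(fD, fZ, gD, gZ, fe, ge, ab, ac, bc, lt_gtF ab, lt_gtF ac, lt_gtF bc) /=.
all: by apply: coef_inj => t; rewrite ?(coefD, coefZ); ring.
Qed.
End HeckeRules.

Section HeckeOnWords.
Context {K : comNzRingType} {dI : Order.disp_t} {I : orderType dI} (cS cR : K).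

Definition hecke_word n (nu : seq I) : {malg K[seq I]} :=
  if ascentn n nu then << swapn n nu >> else cR *: << swapn n nu >> + cS *: << nu >>.

(* [hecke n] is the action of H_(n+1): positions are numbered from 0 here. *)
Definition hecke n := linext (hecke_word n).

Lemma hecke_is_linear n : linear (hecke n).
Proof. exact: linext_is_linear. Qed.

Lemma heckeD n : {morph hecke n : u v / u + v}.
Proof. exact: linD (hecke_is_linear n). Qed.

Lemma heckeZ n c : {morph hecke n : u / c *: u}.
Proof. exact: linZ (hecke_is_linear n) c. Qed.

Lemma heckeU n nu : hecke_rule cS cR (hecke n) (ascentn n nu) << nu >> << swapn n nu >>.
Proof. exact: linextU. Qed.

Let mcoeff_inj (u v : {malg K[seq I]}) : (forall t, u@_t = v@_t) -> u = v.
Proof. by move/malgP. Qed.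

Lemma hecke_quadratic n nu : uniq nu -> (n.+1 < size nu)%N ->
  hecke n (hecke n << nu >>) = cS *: hecke n << nu >> + cR *: << nu >>.
Proof.
move=> unu lt_n; apply: (hecke_rule_quadratic (heckeD n) (heckeZ n) (heckeU n nu)).
by have := heckeU n (swapn n nu); rewrite swapnK ascentn_swapn_self.
Qed.

Lemma hecke_comm m n w : (m.+1 < n)%N -> hecke m (hecke n w) = hecke n (hecke m w).
Proof.
move=> mn; apply: (eq_lin_msupp (hecke m \o hecke n) (hecke n \o hecke m)) => [||nu _].
- exact: lin_comp (hecke_is_linear _) (hecke_is_linear _).
- exact: lin_comp (hecke_is_linear _) (hecke_is_linear _).
pose e (a b : bool) : {malg K[seq I]} :=
  << (if a then swapn m else id) ((if b then swapn n else id) nu) >>.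
rewrite /= -[<< nu >>]/(e false false).
apply: (hecke_rule_comm (cS := cS) (cR := cR) (heckeD m) (heckeZ m) (heckeD n) (heckeZ n)
  mcoeffD mcoeffZ mcoeff_inj (e := e) (af := ascentn m nu) (ag := ascentn n nu))
  => [[]|[]]; rewrite /e /=.
- by have := heckeU m (swapn n nu); rewrite ascentn_swapn // mn.
- exact: heckeU.
- by have := heckeU n (swapn m nu); rewrite swapnC // ascentn_swapn // mn orbT.
- exact: heckeU.
Qed.

Lemma hecke_braid n nu : uniq nu -> (n.+2 < size nu)%N ->
  hecke n (hecke n.+1 (hecke n << nu >>)) = hecke n.+1 (hecke n (hecke n.+1 << nu >>)).
Proof.
move=> unu /split_at3[pre [a [b [c [t [<- Enu]]]]]]; move: unu; rewrite Enu cat_uniq /=.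
move=> /and3P[_ _ /and4P[+ + _ _]]; rewrite !inE !negb_or => /and3P[ab ac _] /andP[bc _].
pose e x y z := << pre ++ [:: x, y, z & t] >> : {malg K[seq I]}.
apply: (hecke_rule_braid (cS := cS) (cR := cR) (heckeD _) (heckeZ _) (heckeD _) (heckeZ _)
  mcoeffD mcoeffZ mcoeff_inj (e := e)) => // x y z; rewrite /e.
  by have := heckeU (size pre) (pre ++ [:: x, y, z & t]); rewrite ascentn_cat swapn_cat.
have := heckeU (size pre).+1 (rcons pre x ++ [:: y, z & t]).
by rewrite -(size_rcons pre x) ascentn_cat swapn_cat !cat_rcons.
Qed.
End HeckeOnWords.

(** * The two module structures *)

Section CounitModule.
Context {K : comNzRingType} {J : choiceType}.
Context {mulb : J -> J -> {malg K[J]}} {oneB : {malg K[J]}}.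
Context {dI : Order.disp_t} {I : orderType dI} {act : I -> J -> {malg K[I]}}.
Hypothesis Vunit : forall v, vactB act v oneB = v.
Context {eps : J -> K}.
Hypotheses (eps1 : epsB eps oneB = 1) (act_counit : forall i j, act i j = eps j *: << i >>).
Context {S R : {malg K[seq J]}} {d : nat} {mu : seq I}.
Hypotheses (homS : homog 2 S) (homR : homog 2 R) (size_mu : size mu = d) (mu_uniq : uniq mu).
Local Notation W := (inW act d mu).
Local Notation H := (hecke (epsT eps S) (epsT eps R)).

Lemma inW_perm w : W w -> {in msupp w, forall nu, perm_eq nu mu}.
Proof.
move=> [l [Hl ->]]; apply: msupp_sum_in => p /Hl[pm hp] nu.
rewrite (vact_counit _ act_counit) //; last by rewrite (perm_size pm) size_mu.
by move/(fsubsetP (msuppZ_le _ _))/(fsubsetP msuppU_le); rewrite in_fset1 => /eqP ->.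
Qed.

Lemma eq_on_inW {V : lmodType K} (f g : {malg K[seq I]} -> V) w :
  linear f -> linear g ->
  (forall nu, perm_eq nu mu -> uniq nu -> f << nu >> = g << nu >>) -> W w -> f w = g w.
Proof.
move=> fl gl fg /inW_perm Ww; apply: eq_lin_msupp => // nu /Ww pm.
by apply: fg; rewrite // (perm_uniq pm).
Qed.

Lemma vact_emb_counit i Z w : homog 2 Z -> (1 <= i <= d.-1)%N -> homog d w ->
  vact act w (emb oneB d i Z) = epsT eps Z *: w.
Proof.
move=> hZ hi hw.
by rewrite (vact_counit_homog _ act_counit _ _ _ hw (homog_emb _ _ _ _ hZ hi)) epsT_emb.
Qed.

Lemma hecke_inW n w : W w -> W (H n w).
Proof.
move=> /inW_perm Ww; apply: inW_linext => nu /Ww pm.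
have Wperm s : perm_eq s mu -> W << s >> by apply: inW_malgU.
have Wswap : W << swapn n nu >> by apply/Wperm; rewrite (perm_trans (perm_swapn _ _)).
rewrite /hecke_word; case: (ascentn n nu) => //.
by apply: inWD; apply: inWZ => //; apply: Wperm.
Qed.

Theorem counit_extends_to_A_module : extends_to_A_module mulb oneB act S R d mu.
Proof.
have hW w : W w -> homog d w by apply: homog_inW.
have hemb i Z w := vact_emb_counit i Z w.
exists (fun i => H i.-1); split; [|split; [|split; [|split; [|split; [|split]]]]].
- by move=> i _ w /(hecke_inW i.-1).
- by move=> i _ a w w' _ _; rewrite hecke_is_linear.
- move=> i hi nu pm; have snu : size nu = d by rewrite (perm_size pm).
  rewrite (heckeU (epsT eps S) (epsT eps R) i.-1 nu).
  case: ascentn => //; rewrite !hemb //; apply: homogU; by rewrite ?size_swapn.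
- move=> k k1 kd w Ww; rewrite -(prednK k1) /=.
  apply: (eq_on_inW (H k.-1 \o (H k.-1.+1 \o H k.-1)) (H k.-1.+1 \o (H k.-1 \o H k.-1.+1)))
    => //.
  + exact: lin_comp (lin_comp (hecke_is_linear _ _ _) (hecke_is_linear _ _ _))
      (hecke_is_linear _ _ _).
  + exact: lin_comp (lin_comp (hecke_is_linear _ _ _) (hecke_is_linear _ _ _))
      (hecke_is_linear _ _ _).
  move=> nu pm unu; apply: hecke_braid => //.
  by rewrite (perm_size pm) size_mu; lia.
- move=> i j /andP[i1 _] /andP[j1 _] ij w _.
  by case/orP: ij => ij; [|symmetry]; apply: hecke_comm; lia.
- move=> i hi w Ww; have hw := hW w Ww.
  rewrite [X in _ + X](hemb _ _ _ homR hi hw) [X in H _ X + _](hemb _ _ _ homS hi hw).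
  rewrite (heckeZ _ _ _ _ w).
  apply: (eq_on_inW (H i.-1 \o H i.-1) (fun u => epsT eps S *: H i.-1 u + epsT eps R *: u))
    => //.
  + exact: lin_comp (hecke_is_linear _ _ _) (hecke_is_linear _ _ _).
  + exact: lin_comb (hecke_is_linear _ _ _) (fun c u v => erefl).
  move=> nu pm unu; apply: hecke_quadratic => //.
  by rewrite (perm_size pm) size_mu; lia.
- move=> i hi b hb w Ww; have hw := hW w Ww.
  have hhw := hW _ (hecke_inW i.-1 w Ww).
  have hsb : homog d (sigma_i i b) by apply: homog_mapkeys => // s; rewrite size_swapn.
  rewrite (vact_counit_homog _ act_counit _ _ _ hhw hb).
  by rewrite (vact_counit_homog _ act_counit _ _ _ hw hsb) (heckeZ _ _ _ _ w) epsT_swapn.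
Qed.
End CounitModule.

Section FlipModule.
Context {K : comNzRingType} {J : choiceType}.
Context {mulb : J -> J -> {malg K[J]}} {oneB : {malg K[J]}}.
Context {dI : Order.disp_t} {I : orderType dI} {act : I -> J -> {malg K[I]}}.
Context {d : nat} {mu : seq I}.
Hypotheses (Vunit : forall v, vactB act v oneB = v) (size_mu : size mu = d).
Local Notation W := (inW act d mu).

Lemma swapn_inW n w : W w -> W (mapkeys (swapn n) w).
Proof.
move=> [l [Hl ->]]; exists [seq (swapn n p.1, mapkeys (swapn n) p.2) | p <- l]; split.
  move=> _ /mapP[p /Hl[pm hp] ->] /=; split; first exact: perm_trans (perm_swapn _ _) pm.
  by apply: homog_mapkeys => // s; rewrite size_swapn.
rewrite (lin_sum (mapkeys_is_linear _)) big_map; apply: eq_big_seq => p /Hl[pm hp].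
have sp : size p.1 = d by rewrite (perm_size pm).
by rewrite (swapn_vact act d n _ _ (homogU _ _ sp) hp) mapkeysU.
Qed.

Theorem flip_extends_to_A_module :
  extends_to_A_module mulb oneB act 0 (ptens [:: oneB; oneB]) d mu.
Proof.
have hW w : W w -> homog d w by apply: homog_inW.
have vact_embR i w : (1 <= i <= d.-1)%N -> homog d w ->
    vact act w (emb oneB d i (ptens [:: oneB; oneB])) = w.
  by move=> hi hw; rewrite emb_ones // (vact_ones_homog _ _ Vunit _ _ hw).
have vact_embS i w : vact act w (emb oneB d i 0) = 0.
  by rewrite emb0 (lin0 (vact_linr _ _)).
exists sigma_i; split; [|split; [|split; [|split; [|split; [|split]]]]].
- by move=> i _ w /(swapn_inW i.-1).
- by move=> i _ a w w' _ _; rewrite /sigma_i mapkeys_is_linear.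
- move=> i hi nu pm; rewrite /sigma_i mapkeysU vact_embS addr0 vact_embR //.
    by case: ifP.
  by apply: homogU; rewrite size_swapn (perm_size pm).
- move=> k k1 kd w Ww; rewrite /sigma_i !mapkeys_comp; apply: eq_mapkeys => s /(hW w Ww) sd.
  by rewrite -(prednK k1); apply: swapn_braid; lia.
- move=> i j /andP[i1 _] /andP[j1 _] ij w _; rewrite /sigma_i !mapkeys_comp.
  by apply: eq_mapkeys => s _; case/orP: ij => ij; [|symmetry]; apply: swapnC; lia.
- move=> i hi w Ww; have hw := hW w Ww.
  rewrite [X in _ + X](vact_embR _ _ hi hw) [X in sigma_i _ X + _]vact_embS.
  rewrite /sigma_i (lin0 (mapkeys_is_linear _)).
  by rewrite add0r mapkeys_comp mapkeys_id // => s _; apply: swapnK.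
- move=> i hi b hb w Ww; have hsb : homog d (sigma_i i b).
    by apply: homog_mapkeys => // s; rewrite size_swapn.
  rewrite /sigma_i (swapn_vact act d _ _ _ (hW w Ww) hsb).
  by rewrite mapkeys_comp (mapkeys_id _ b) // => s _; apply: swapnK.
Qed.
End FlipModule.

Theorem proposition7p3
  (K : comNzRingType)
  (* B: free K-module with basis (b_j)_{j in J}, associative unital *)
  (J : choiceType) (mulb : J -> J -> {malg K[J]}) (oneB : {malg K[J]})
  (Bassoc : forall x y z : {malg K[J]},
     bmul mulb (bmul mulb x y) z = bmul mulb x (bmul mulb y z))
  (Bunitl : forall x, bmul mulb oneB x = x)
  (Bunitr : forall x, bmul mulb x oneB = x)
  (* V_B: right B-module with K-basis (v_i)_{i in I}, I totally ordered *)
  (dI : Order.disp_t) (I : orderType dI) (act : I -> J -> {malg K[I]})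
  (Vassoc : forall (v : {malg K[I]}) x y,
     vactB act (vactB act v x) y = vactB act v (bmul mulb x y))
  (Vunit : forall v, vactB act v oneB = v)
  (* parameters S, R in B (x) B; sigma = flip; rho = 0 *)
  (S R : {malg K[seq J]}) (homS : homog 2 S) (homR : homog 2 R)
  (* (C3) *)
  (C3a : tmul mulb (sigma_i 1 S) S + sigma_i 1 R = tmul mulb S S + R)
  (C3b : tmul mulb (sigma_i 1 S) R = tmul mulb S R)
  (* (C4) *)
  (C4a : forall a, homog 2 a ->
     tmul mulb (sigma_i 1 (sigma_i 1 a)) S = tmul mulb S (sigma_i 1 a))
  (C4b : forall a, homog 2 a ->
     tmul mulb (sigma_i 1 (sigma_i 1 a)) R = tmul mulb R a)
  (* (C8) in B^{(x)3} *)
  (C8S1 : emb oneB 3 1 S = sigma_i 2 (sigma_i 1 (emb oneB 3 2 S)))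
  (C8S2 : emb oneB 3 2 S = sigma_i 1 (sigma_i 2 (emb oneB 3 1 S)))
  (C8R1 : emb oneB 3 1 R = sigma_i 2 (sigma_i 1 (emb oneB 3 2 R)))
  (C8R2 : emb oneB 3 2 R = sigma_i 1 (sigma_i 2 (emb oneB 3 1 R)))
  (d : nat) (hd : (2 <= d)%N)
  (mu : seq I) (size_mu : size mu = d) (mu_incr : sorted (fun x y => (x < y)%O) mu) :
  (* (a) *)
  (forall eps : J -> K,
     (forall j j', epsB eps (mulb j j') = eps j * eps j') ->
     epsB eps oneB = 1 ->
     (forall i j, act i j = eps j *: << i >>) ->
     (exists r : K, r ^+ 2 = epsT eps S * r + epsT eps R) ->
     extends_to_A_module mulb oneB act S R d mu)
  /\
  (* (b) *)
  (S = 0 -> R = ptens [:: oneB; oneB] ->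
     extends_to_A_module mulb oneB act S R d mu).
Proof.
split=> [eps _ eps1 act_counit _ | -> ->].
  exact: (counit_extends_to_A_module (mulb := mulb) Vunit eps1 act_counit homS homR size_mu
    (lt_sorted_uniq mu_incr)).
exact: flip_extends_to_A_module Vunit size_mu.
Qed.
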